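(* Let $m$ and $n$ be non-negative integers with $m+n\ge1$. Then the rational number $$\binom{m+n}{m}\binom{n+1}{m}\binom{2n}{n}\frac{3m^2+n^2+m+n}{(m+n)(n+1)}$$ is an integer divisible by $m+n+1$.
   Context: Binomial coefficients $\binom{a}{b}$ with $b>a\ge 0$ are zero. *)

From HB Require Import structures.
From mathcomp Require Import all_boot all_order all_algebra.
Set Implicit Arguments. Unset Strict Implicit. Unset Printing Implicit Defensive.
Import Order.TTheory GRing.Theory Num.Theory.
Local Open Scope ring_scope.

Definition lemma3_val (m n : nat) : rat :=
  ('C(m + n, m) * 'C(n.+1, m) * 'C(2 * n, n))%:R
  * ((3 * m ^ 2 + n ^ 2 + m + n)%:R / ((m + n) * n.+1)%:R).

From HB Require Import structures.
From mathcomp Require Import all_boot all_order all_algebra.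
From mathcomp Require Import ring zify.
Import GRing.Theory Num.Theory.
Local Open Scope ring_scope.

(* Trinomial revision gives (m+n) C(2n,n) C(n+1,m) = (n+1) C(m+n,m) C(2n,m+n-1),
   so the value is C(m+n,m)^2 C(2n,m+n-1) (3m^2+n^2+m+n) / (m+n)^2.  The
   binomials C(m+n-1,m), C(2n,n+m) and C(2n,n+m+1) are rational multiples of
   C(m+n,m) and C(2n,m+n-1), and the resulting rational identity exhibits the
   value as m+n+1 times an explicit integer combination of binomials, uniformly
   in m and n (all degenerate cases included). *)

Lemma natr_mul_bin_left (R : pzRingType) (N k : nat) :
  k.+1%:R * 'C(N, k.+1)%:R = (N%:R - k%:R) * 'C(N, k)%:R :> R.
Proof.
have [lekN | ltNk] := leqP k N.
  by rewrite -natrB // -!natrM mul_bin_left.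
by rewrite !bin_small ?mulr0 // ltnW.
Qed.

Lemma bin_trinomial (N k j : nat) : (j <= k)%N ->
  ('C(N, k) * 'C(k, j) = 'C(N, j) * 'C(N - j, k - j))%N.
Proof.
move=> lejk; have [lekN | ltNk] := leqP k N; last first.
  rewrite (bin_small ltNk) mul0n; have [lejN | ltNj] := leqP j N.
    by rewrite (@bin_small (N - j)) ?muln0 //; lia.
  by rewrite (bin_small ltNj).
have fact_pos : (0 < j`! * (k - j)`! * (N - k)`!)%N.
  by rewrite !muln_gt0 !fact_gt0.
apply/eqP; rewrite -(eqn_pmul2r fact_pos); apply/eqP.
transitivity N`!.
  by rewrite -(bin_fact lekN) -(bin_fact lejk); ring.
rewrite -(bin_fact (leq_trans lejk lekN)) -(@bin_fact (N - j) (k - j)).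
  by rewrite (_ : N - j - (k - j) = N - k)%N; [ring | lia].
lia.
Qed.

Lemma mul_central_bin (n m : nat) : (0 < n + m)%N ->
  ((n + m) * ('C(2 * n, n) * 'C(n.+1, m))
   = n.+1 * ('C(m + n, m) * 'C(2 * n, (n + m).-1)))%N.
Proof.
move=> nm_gt0; apply/eqP; rewrite -(@eqn_pmul2l (2 * n).+1) //; apply/eqP.
have central : ((2 * n).+1 * 'C(2 * n, n) = n.+1 * 'C((2 * n).+1, n))%N.
  by rewrite (mul_bin_down (2 * n).+1 n); congr (_ * _)%N; lia.
have shifted : ((2 * n).+1 * 'C(2 * n, (n + m).-1)
                 = (n + m) * 'C((2 * n).+1, n + m))%N.
  by rewrite (mul_bin_diag (2 * n).+1) prednK.
have revision : ('C((2 * n).+1, n) * 'C(n.+1, m)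
                  = 'C((2 * n).+1, n + m) * 'C(m + n, m))%N.
  have := bin_trinomial (2 * n).+1 (n + m) n (leq_addr m n).
  rewrite addKn (_ : (2 * n).+1 - n = n.+1)%N; last by lia.
  move=> <-; congr (_ * _)%N.
  by rewrite addnC -bin_sub ?leq_addl // addnK.
transitivity ((n + m) * 'C(n.+1, m) * ((2 * n).+1 * 'C(2 * n, n)))%N.
  by ring.
rewrite central.
transitivity (n.+1 * (n + m) * ('C((2 * n).+1, n) * 'C(n.+1, m)))%N.
  by ring.
rewrite revision.
transitivity (n.+1 * 'C(m + n, m) * ((n + m) * 'C((2 * n).+1, n + m)))%N.
  by ring.
by rewrite -shifted; ring.
Qed.

(* [A - b] is [C(m+n-1, m-1)] for [m > 0] and vanishes for [m = 0]. *)
Definition lemma3_quotient (m n : nat) : int :=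
  let A := 'C(m + n, m) in let b := 'C((m + n).-1, m) in
  A%:Z ^+ 2 * ('C(2 * n, n + m)%:Z - 'C(2 * n, (n + m).+1)%:Z)
  + 2 * (A%:Z - b%:Z) * (A%:Z - 2 * b%:Z) * 'C(2 * n, (n + m).-1)%:Z.

Lemma lemma3_valE (m n : nat) : (0 < m + n)%N ->
  lemma3_val m n = ((m + n + 1)%:Z * lemma3_quotient m n)%:~R.
Proof.
move=> mn_gt0; have nm_gt0 : (0 < n + m)%N by rewrite addnC.
rewrite /lemma3_val /lemma3_quotient /=.
rewrite !(intrM, intrD, intrN) -!pmulrn /=.
set A := 'C(m + n, m); set b := 'C((m + n).-1, m).
set D := 'C(2 * n, (n + m).-1); set H := 'C(2 * n, n + m).
set H1 := 'C(2 * n, (n + m).+1).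
have mn_neq0 : ((m + n)%:R : rat) != 0 by rewrite pnatr_eq0 -lt0n.
have hb : (m + n)%:R * b%:R = n%:R * A%:R :> rat.
  by rewrite -!natrM /b /A mul_bin_down addKn.
have hH : (n + m)%:R * H%:R = (n%:R + 1 - m%:R) * D%:R :> rat.
  rewrite /H /D -[in LHS](prednK nm_gt0) natr_mul_bin_left; congr (_ * _).
  have pred_nm : (n + m).-1%:R = (n + m)%:R - 1 :> rat.
    by rewrite -[in RHS](prednK nm_gt0) -natr1 addrK.
  by rewrite pred_nm natrM natrD; ring.
have hH1 : (n + m).+1%:R * H1%:R = (n%:R - m%:R) * H%:R :> rat.
  by rewrite /H1 /H natr_mul_bin_left natrM natrD; congr (_ * _); ring.
have hPQ := congr1 (fun k => k%:R : rat) (mul_central_bin n m nm_gt0).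
rewrite /= !natrM -/A -/D in hPQ.
have nm_neq0 : ((n + m)%:R : rat) != 0 by rewrite pnatr_eq0 -lt0n.
have nm1_neq0 : ((n + m).+1%:R : rat) != 0 by rewrite pnatr_eq0.
have eb : b%:R = n%:R * A%:R / (m + n)%:R :> rat.
  by rewrite -hb mulrAC divff // mul1r.
have eH : H%:R = (n%:R + 1 - m%:R) * D%:R / (n + m)%:R :> rat.
  by rewrite -hH mulrAC divff // mul1r.
have eH1 : H1%:R = (n%:R - m%:R) * H%:R / (n + m).+1%:R :> rat.
  by rewrite -hH1 mulrAC divff // mul1r.
have ePQ : 'C(2 * n, n)%:R * 'C(n.+1, m)%:R
           = n.+1%:R * (A%:R * D%:R) / (n + m)%:R :> rat.
  by rewrite -hPQ mulrAC divff // mul1r.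
rewrite !natrM -(mulrA A%:R) (mulrC 'C(n.+1, m)%:R) ePQ eH1 eH eb.
by field; rewrite -[1]/(1%:R : rat) -!natrD !pnatr_eq0; lia.
Qed.

Theorem lemma3 (m n : nat) (hmn : (1 <= m + n)%N) :
  exists k : int, lemma3_val m n = ((m + n + 1)%:Z * k)%:~R.
Proof. by exists (lemma3_quotient m n); exact: lemma3_valE. Qed.
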